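(* Let $V$ be a vertex operator algebra and fix $n\in\mathbb{N}$. Let $u\in V$ be homogeneous and $v\in V$. (a) If $\mathrm{wt}\,u>-n$, then for every integer $m\ge n+1$, \[ u_{\mathrm{wt}\,u-m-1}v\ \sim_n\ (-1)^{m+\mathrm{wt}\,u}\sum_{j=1}^{n+\mathrm{wt}\,u}\binom{m-n-1}{j-1}\binom{m-n-j-1}{n+\mathrm{wt}\,u-j}\,u_{\mathrm{wt}\,u-n-j-1}v . \] Moreover, for $n+1\le m\le 2n+\mathrm{wt}\,u$ the right-hand side equals $u_{\mathrm{wt}\,u-m-1}v$ (so the relation is trivial in that range). (b) If $\mathrm{wt}\,u=-n$, then for every integer $m\ge n+1$, $u_{\mathrm{wt}\,u-m-1}v\sim_n 0$.
   Context: $V$ is a vertex operator algebra with vacuum $\mathbf{1}$, vertex operator $Y(v,x)=\sum_{k\in\mathbb{Z}}v_kx^{-k-1}$, and Virasoro operators $L(m)$; for homogeneous $v$, $\mathrm{wt}\,v$ denotes its $L(0)$-eigenvalue (an integer). For $n\in\mathbb{N}$, homogeneous $u\in V$ and $w\in V$, set $u\circ_n w=\mathrm{Res}_x\,(1+x)^{\mathrm{wt}\,u+n}Y(u,x)w\,x^{-2n-2}$ (a finite sum in $V$; $(1+x)^p$ is expanded in nonnegative powers of $x$), extended linearly in $u$. Let $O_n^\circ(V)=\mathrm{span}\{u\circ_n w: u,w\in V\}$. Write $a\sim_n b$ if $a-b\in O_n^\circ(V)$. Binomial coefficients: $\binom{p}{q}=p(p-1)\cdots(p-q+1)/q!$ for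 $p\in\mathbb{Z}$, $q\in\mathbb{N}$, and $\binom{p}{q}=0$ for $q<0$. *)

(* Vertex operator algebras over the complex numbers
   C := R[i] (R : realType, a model of the real numbers), in the
   component ("modes") formulation of Lepowsky--Li, Def. 3.1.22. *)
From HB Require Import structures.
From mathcomp Require Import all_boot all_order all_algebra.
From mathcomp Require Import complex reals.
Set Implicit Arguments. Unset Strict Implicit. Unset Printing Implicit Defensive.
Import Order.TTheory GRing.Theory Num.Theory.
Local Open Scope ring_scope.

Definition binZ (K : fieldType) (p : int) (q : nat) : K :=
  (\prod_(i < q) (p - (i : nat)%:Z))%:~R / (q`!)%:R.

Section VOADefs.
Variable K : fieldType.
Variable V : lmodType K.
(* Y k u w = u_k w, the coefficient of x^(-k-1) in Y(u,x) w. *)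
Variable Y : int -> V -> V -> V.
Variable vac om : V.
Variable c : K.

Definition Lop (m : int) (v : V) : V := Y (m + 1) om v.

Definition in_span (b : seq V) (v : V) : Prop :=
  exists cs : seq K, size cs = size b /\
    v = \sum_(i < size b) cs`_i *: b`_i.

Record is_VOA : Prop := {
  Y_linl : forall k a u u' w, Y k (a *: u + u') w = a *: Y k u w + Y k u' w;
  Y_linr : forall k a u w w', Y k u (a *: w + w') = a *: Y k u w + Y k u w';
  Y_trunc : forall u w, exists N : int, forall k, N <= k -> Y k u w = 0;
  Y_vac : forall k w, Y k vac w = (if k == -1 then w else 0);
  (* creation property: Y(u,x)1 = u + x V[[x]] *)
  Y_create_pos : forall k u, 0 <= k -> Y k u vac = 0;
  Y_create : forall u, Y (-1) u vac = u;
  (* Jacobi identity, in its component (Borcherds) form: for l m n in Z,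
     sum_{i>=0} C(m,i) (u_{l+i} v)_{m+n-i} w
       = sum_{i>=0} (-1)^i C(l,i) (u_{l+m-i} v_{n+i} w - (-1)^l v_{l+n-i} u_{m+i} w);
     both sides are finite sums by truncation, so we require equality of
     all sufficiently long partial sums. *)
  Y_jacobi : forall (l m n : int) (u v w : V), exists N : nat, forall M : nat,
    (N <= M)%N ->
    \sum_(i < M) binZ K m i *: Y (m + n - (i : nat)%:Z) (Y (l + (i : nat)%:Z) u v) w
    = \sum_(i < M) ((-1) ^+ i * binZ K l i) *:
        (Y (l + m - (i : nat)%:Z) u (Y (n + (i : nat)%:Z) v w)
         - (-1) ^ l *: Y (l + n - (i : nat)%:Z) v (Y (m + (i : nat)%:Z) u w));
  L_vir : forall (m k : int) (v : V),
    Lop m (Lop k v) - Lop k (Lop m v)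
    = (m - k)%:~R *: Lop (m + k) v
      + (if m + k == 0 then ((m ^+ 3 - m)%:~R / 12%:R * c) *: v else 0);
  (* L(-1)-derivative property: Y(L(-1)u,x) = d/dx Y(u,x) *)
  L_deriv : forall (k : int) (u w : V), Y k (Lop (-1) u) w = (- k)%:~R *: Y (k - 1) u w;
  om_wt : Lop 0 om = 2%:R *: om;
  (* grading V = (+)_{n in Z} V_(n), V_(n) = {v | L(0) v = n v} *)
  V_graded : forall v : V, exists s : seq (int * V),
    (forall i : nat, (i < size s)%N ->
       Lop 0 (nth (0, 0) s i).2 = ((nth (0, 0) s i).1)%:~R *: (nth (0, 0) s i).2) /\
    v = \sum_(t <- s) t.2;
  (* dim V_(n) < oo *)
  V_fin : forall n : int, exists b : seq V,
    forall v, Lop 0 v = n%:~R *: v -> in_span b v;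
  V_low : exists N : int, forall (n : int) (v : V), n < N ->
    Lop 0 v = n%:~R *: v -> v = 0
}.

(* circ_val n u w y : u is homogeneous (of weight k) and
   y = u o_n w = Res_x (1+x)^(k+n) Y(u,x) w x^(-2n-2)
     = sum_{i>=0} binom(k+n, i) u_{i-2n-2} w,
   the sum being truncated at an M beyond which all terms vanish. *)
Definition circ_val (n : nat) (u w y : V) : Prop :=
  exists k : int, Lop 0 u = k%:~R *: u /\
  exists M : nat,
    (forall i : nat, (M <= i)%N -> Y (i%:Z - 2 * n%:Z - 2) u w = 0) /\
    y = \sum_(i < M) binZ K (k + n%:Z) i *: Y ((i : nat)%:Z - 2 * n%:Z - 2) u w.

(* O_n^circ(V) = span { u o_n w } *)
Inductive in_O (n : nat) : V -> Prop :=
  | in_O0 : in_O n 0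
  | in_Oadd : forall (a : K) (u w y x : V),
      circ_val n u w y -> in_O n x -> in_O n (a *: y + x).

End VOADefs.

(* Put [modes w b p = sum_i p_i w_(b-i) v] for a polynomial [p].  With
   [N = n + wt u] and [b = N - 2n - 2], [u_(wt u - m - 1) v] is
   [modes u b X^(m-n-1)], while [w o_n v = modes w b ((X+1)^N)] for every [w] of
   weight [N - n].  The [L(-1)]-derivative property turns [modes (L(-1)w)] into
   [modes w] of [X p' - b p], and [L(-1)w] has weight one more than [w]; by
   induction this puts [modes w (b - e) ((X+1)^N)] in [O_n(V)] for every [e],
   so [modes w b] maps all multiples of [(X+1)^N] into [O_n(V)].  Hence
   [u_(wt u - m - 1) v] is congruent to [modes u b r], [r] the remainder of
   [X^(m-n-1)] modulo [(X+1)^N]; expanding [X^M = ((X+1) - 1)^M] gives the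
   coefficients of [r], and [r = X^M] when [M < N].  For [wt u = -n] we have
   [N = 0] and the remainder vanishes. *)
From HB Require Import structures.
From mathcomp Require Import all_boot all_order all_algebra.
From mathcomp Require Import complex reals.
From mathcomp Require Import ring zify.
Set Implicit Arguments. Unset Strict Implicit. Unset Printing Implicit Defensive.
Import Order.TTheory GRing.Theory Num.Theory.
Local Open Scope ring_scope.

Lemma big_ord_widen_eq0 (M : zmodType) (F : nat -> M) n1 n2 : (n1 <= n2)%N ->
  (forall i, (n1 <= i < n2)%N -> F i = 0) ->
  \sum_(i < n1) F i = \sum_(i < n2) F i.
Proof.
move=> le12 F0; rewrite (big_ord_widen n2 F le12) big_mkcond.
apply: eq_bigr => i _; case: ifP => // /negbT; rewrite -leqNgt => hi.
by rewrite F0 // hi ltn_ord.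
Qed.

Lemma mul_bin_bin (M k i : nat) : (i <= k)%N ->
  ('C(M, k) * 'C(k, i) = 'C(M, i) * 'C(M - i, k - i))%N.
Proof.
move=> le_ik; have [le_kM | lt_Mk] := leqP k M; last first.
  rewrite bin_small // mul0n; have [le_iM | lt_Mi] := leqP i M.
    by rewrite (@bin_small (M - i)) ?muln0 //; lia.
  by rewrite bin_small.
have le_iM : (i <= M)%N by lia.
have le_kiMi : (k - i <= M - i)%N by lia.
apply/eqP; rewrite -(eqn_pmul2r (fact_gt0 i)) -(eqn_pmul2r (fact_gt0 (k - i))).
rewrite -(eqn_pmul2r (fact_gt0 (M - k))); apply/eqP.
have factM := bin_fact le_kM; have factk := bin_fact le_ik.
have factMi := bin_fact le_iM; have factMik := bin_fact le_kiMi.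
rewrite (_ : M - i - (k - i) = M - k)%N in factMik; last by lia.
transitivity ('C(M, k) * (k`! * (M - k)`!))%N; first by rewrite -factk; ring.
by rewrite factM -factMi -factMik; ring.
Qed.

Section GeneralizedBinomial.
Variable K : numFieldType.

Lemma binZ0 (p : int) : binZ K p 0 = 1.
Proof. by rewrite /binZ big_ord0 fact0 divr1. Qed.

Lemma natr_fact_neq0 q : (q`!)%:R != 0 :> K.
Proof. by rewrite pnatr_eq0 -lt0n fact_gt0. Qed.

Lemma binZ_nat (a q : nat) : binZ K a q = 'C(a, q)%:R.
Proof.
rewrite /binZ; have [le_qa | lt_aq] := leqP q a; last first.
  by rewrite bin_small // (bigD1 (Ordinal lt_aq)) //= subrr !mul0r.
have -> : \prod_(i < q) (a%:Z - (i : nat)%:Z) = (a ^_ q)%:Z.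
  rewrite ffact_prod -[RHS]natz natr_prod; apply: eq_bigr => i _.
  by rewrite subzn ?natz // ltnW // (leq_trans (ltn_ord i)).
by rewrite -pmulrn -bin_ffact natrM mulfK // natr_fact_neq0.
Qed.

Lemma binZS (p : int) q : binZ K (p + 1) q.+1 = binZ K p q.+1 + binZ K p q.
Proof.
rewrite /binZ big_ord_recl big_ord_recr /=.
have -> : \prod_(i < q) (p + 1 - (bump 0 i)%:Z) = \prod_(i < q) (p - (i : nat)%:Z).
  by apply: eq_bigr => i _; rewrite /bump /= add1n -addn1 PoszD; ring.
rewrite factS natrM !rmorphM /= subr0.
have q1_neq0 : (q.+1)%:R != 0 :> K by rewrite pnatr_eq0.
by field; rewrite natr_fact_neq0 /= addrC natr1 q1_neq0.
Qed.

Lemma sum_alt_bin (a r : nat) :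
  \sum_(l < r.+1) (-1) ^+ l * 'C(a, l)%:R = (-1) ^+ r * binZ K (a%:Z - 1) r :> K.
Proof.
elim: r => [|r IH]; first by rewrite big_ord1 binZ0 bin0 expr0 mul1r.
rewrite big_ord_recr /= IH.
have := binZS (a%:Z - 1) r; rewrite subrK binZ_nat => ->.
by rewrite exprS; ring.
Qed.

Lemma sum_sign_bin_mul_bin (M N i : nat) : (i < N)%N ->
  \sum_(k < N) (-1) ^+ (M - k) * 'C(M, k)%:R * 'C(k, i)%:R
  = (-1) ^+ (M + N + 1) * ('C(M, i)%:R * binZ K (M%:Z - i%:Z - 1) (N - i.+1)) :> K.
Proof.
move=> lt_iN; have [le_iM | lt_Mi] := leqP i M; last first.
  rewrite bin_small // mul0r mulr0; apply: big1 => k _.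
  have [le_ik | lt_ki] := leqP i k; last by rewrite (@bin_small k i) // mulr0.
  by rewrite (@bin_small M k) ?mulr0 ?mul0r //; lia.
set r := (N - i.+1)%N; have -> : N = (i + r.+1)%N by rewrite /r; lia.
rewrite big_split_ord /= big1 ?add0r; last by move=> k _; rewrite (@bin_small k i) ?mulr0.
have -> : \sum_(l < r.+1) (-1) ^+ (M - (i + l)) * 'C(M, i + l)%:R * 'C(i + l, i)%:R
   = \sum_(l < r.+1) ((-1) ^+ (M + i) * 'C(M, i)%:R) * ((-1) ^+ l * 'C(M - i, l)%:R) :> K.
  apply: eq_bigr => l _; rewrite -mulrA -natrM mul_bin_bin ?leq_addr // addKn natrM.
  have [le_lMi | lt_Mil] := leqP l (M - i); last by rewrite (@bin_small _ l) // !mulr0.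
  have -> : (-1) ^+ (M - (i + l)) = (-1) ^+ (M + i) * (-1) ^+ l :> K.
    rewrite -signr_odd oddB; last by lia.
    by rewrite oddD addbA signr_addb -oddD !signr_odd.
  by rewrite mulrACA.
rewrite -mulr_sumr sum_alt_bin -subzn //.
by rewrite (_ : M + _ + 1 = (M + i) + r + 2)%N ?exprD; [ring | lia].
Qed.

End GeneralizedBinomial.

Section PolynomialsXadd1.
Variable K : numFieldType.
Implicit Types (p : {poly K}) (M N : nat).

Lemma coef_Xadd1_exp N i : (('X + 1) ^+ N : {poly K})`_i = 'C(N, i)%:R.
Proof.
elim: N i => [|N IH] [|i]; rewrite ?expr0 ?coef1 ?bin0n // exprS mulrDl mul1r.
  by rewrite coefD coefXM /= IH add0r !bin0.
by rewrite coefD coefXM /= !IH binS natrD addrC.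
Qed.

Lemma size_Xadd1_exp N : (size (('X + 1) ^+ N : {poly K}) <= N.+1)%N.
Proof. by apply/leq_sizeP => j hj; rewrite coef_Xadd1_exp bin_small. Qed.

Lemma coef_Xderiv_sub (b : K) p j : ('X * p^`() - b *: p)`_j = (j%:R - b) * p`_j.
Proof.
rewrite coefB coefZ coefXM; case: j => [|j] /=; first by ring.
by rewrite coef_deriv -mulr_natr; ring.
Qed.

Lemma Xderiv_sub_Xadd1_exp N (b : K) :
  'X * (('X + 1) ^+ N.+1)^`() - b *: ('X + 1) ^+ N.+1
  = ((N.+1)%:R - b) *: ('X * ('X + 1) ^+ N) - b *: ('X + 1) ^+ N.
Proof.
rewrite deriv_exp derivD derivX derivC addr0 mul1r /= -!mul_polyC exprS rmorphB /=.
ring.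
Qed.

Definition expX_rem M N : {poly K} :=
  \sum_(k < N) ((-1) ^+ (M - k) * 'C(M, k)%:R) *: ('X + 1) ^+ k.

Definition expX_quo M N : {poly K} :=
  \sum_(k < M.+1) ((-1) ^+ (M - (N + k)) * 'C(M, N + k)%:R) *: ('X + 1) ^+ k.

Lemma expX_divXadd1 M N : 'X^M = expX_rem M N + expX_quo M N * ('X + 1) ^+ N.
Proof.
pose F k := ((-1) ^+ (M - k) * 'C(M, k)%:R) *: (('X + 1) ^+ k : {poly K}).
have -> : 'X^M = \sum_(k < M.+1) F k.
  rewrite (_ : 'X = -1 + ('X + 1)); last by ring.
  rewrite exprDn; apply: eq_bigr => k _.
  by rewrite /F -mul_polyC rmorphM rmorphXn rmorphN1 /= polyC_natr mulr_natr mulrnAl.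
rewrite (@big_ord_widen_eq0 _ F M.+1 (N + M.+1)) ?leq_addl //; last first.
  by move=> k /andP[lt_Mk _]; rewrite /F bin_small // mulr0 scale0r.
rewrite big_split_ord /= mulr_suml; congr (_ + _); apply: eq_bigr => k _.
by rewrite /F -scalerAl -exprD addnC.
Qed.

Lemma size_expX_rem M N : (size (expX_rem M N) <= N)%N.
Proof.
apply/leq_sizeP => j le_Nj; rewrite coef_sum big1 // => k _.
by rewrite coefZ coef_Xadd1_exp (@bin_small k j) ?mulr0 // (leq_trans (ltn_ord k)).
Qed.

Lemma coef_expX_rem M N i : (i < N)%N ->
  (expX_rem M N)`_i
  = (-1) ^+ (M + N + 1) * ('C(M, i)%:R * binZ K (M%:Z - i%:Z - 1) (N - i.+1)).
Proof.
move=> lt_iN; rewrite -sum_sign_bin_mul_bin // coef_sum.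
by apply: eq_bigr => k _; rewrite coefZ coef_Xadd1_exp.
Qed.

Lemma expX_sub_rem M N : 'X^M - expX_rem M N = expX_quo M N * ('X + 1) ^+ N.
Proof. by rewrite (expX_divXadd1 M N) addrAC subrr add0r. Qed.

Lemma expX_rem_small M N : (M < N)%N -> expX_rem M N = 'X^M.
Proof.
move=> lt_MN; rewrite [RHS](expX_divXadd1 M N) /expX_quo big1 ?mul0r ?addr0 // => k _.
by rewrite bin_small ?mulr0 ?scale0r // (leq_trans lt_MN) ?leq_addr.
Qed.

End PolynomialsXadd1.

Section VOA.
Variable K : numFieldType.
Variable V : lmodType K.
Variable Y : int -> V -> V -> V.
Variables (vac om : V) (c : K).
Hypothesis hV : is_VOA Y vac om c.
Variable n : nat.
Variable v : V.

Local Notation O := (in_O Y om n).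
Local Notation L := (Lop Y om).
Implicit Types (p q : {poly K}).

Lemma in_OD x y : O x -> O y -> O (x + y).
Proof.
elim=> [|a u w y' x' u_circ _ IH] Oy; first by rewrite add0r.
by rewrite -addrA; apply: in_Oadd u_circ (IH Oy).
Qed.

Lemma in_OZ a x : O x -> O (a *: x).
Proof.
elim=> [|b u w y' x' u_circ _ IH]; first by rewrite scaler0; apply: in_O0.
by rewrite scalerDr scalerA; apply: in_Oadd u_circ IH.
Qed.

Lemma in_O_circ_val u w y : circ_val Y om n u w y -> O y.
Proof. by move=> u_circ; rewrite -[y]addr0 -[y]scale1r; apply: in_Oadd u_circ (in_O0 _ _ _). Qed.

Lemma Y_scaler k a w x : Y k w (a *: x) = a *: Y k w x.
Proof.
have Y0 : Y k w 0 = 0.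
  have := Y_linr hV k 1 w 0 0; rewrite !scale1r !addr0 => Y00.
  by apply: (@addrI _ (Y k w 0)); rewrite addr0 -Y00.
by have := Y_linr hV k a w x 0; rewrite !addr0 Y0 addr0.
Qed.

Lemma Lm1_wt w (k : int) : L 0 w = k%:~R *: w ->
  L 0 (L (-1) w) = (k + 1)%:~R *: L (-1) w.
Proof.
move=> w_wt; have := L_vir hV 0 (-1) w.
rewrite /= add0r sub0r opprK scale1r addr0 w_wt [X in _ - X]/Lop Y_scaler.
by move/eqP; rewrite subr_eq => /eqP ->; rewrite rmorphD /= scalerDl scale1r addrC.
Qed.

Definition modes (w : V) (b : int) (p : {poly K}) : V :=
  \sum_(i < size p) p`_i *: Y (b - (i : nat)%:Z) w v.

Lemma modes_widen w b p B : (size p <= B)%N ->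
  modes w b p = \sum_(i < B) p`_i *: Y (b - (i : nat)%:Z) w v.
Proof.
move=> le_pB; apply: (@big_ord_widen_eq0 _ (fun i : nat => p`_i *: Y (b - i%:Z) w v) _ _ le_pB).
by move=> i /andP[le_pi _]; rewrite nth_default // scale0r.
Qed.

Lemma modes0 w b : modes w b 0 = 0.
Proof. by rewrite /modes size_poly0 big_ord0. Qed.

Lemma modesD w b p q : modes w b (p + q) = modes w b p + modes w b q.
Proof.
rewrite !(@modes_widen _ _ _ (maxn (size p) (size q))) ?leq_maxl ?leq_maxr ?size_polyD //.
by rewrite -big_split; apply: eq_bigr => i _; rewrite coefD scalerDl.
Qed.

Lemma modesZ w b a p : modes w b (a *: p) = a *: modes w b p.
Proof.
rewrite !(@modes_widen _ _ _ (size p)) ?size_scale_leq // scaler_sumr.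
by apply: eq_bigr => i _; rewrite coefZ scalerA.
Qed.

Lemma modesB w b p q : modes w b (p - q) = modes w b p - modes w b q.
Proof. by rewrite modesD -[- q]scaleN1r modesZ scaleN1r. Qed.

Lemma modesXM w b p : modes w b ('X * p) = modes w (b - 1) p.
Proof.
rewrite (@modes_widen _ _ _ (size p).+1); last first.
  by rewrite mulrC (leq_trans (size_polyMleq _ _)) // size_polyX addn2.
rewrite big_ord_recl coefXM /= scale0r add0r; apply: eq_bigr => i _.
by rewrite coefXM /bump /= add1n; congr (_ *: Y _ w v); rewrite -addn1 PoszD; ring.
Qed.

Lemma modesXn w b k : modes w b 'X^k = Y (b - k%:Z) w v.
Proof.
rewrite (@modes_widen _ _ _ k.+1) ?size_polyXn // big_ord_recr /= coefXn eqxx scale1r.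
by rewrite big1 ?add0r // => i _; rewrite coefXn ltn_eqF ?scale0r.
Qed.

Lemma modes_Lm1 w b p : modes (L (-1) w) b p = modes w (b - 1) ('X * p^`() - b%:~R *: p).
Proof.
rewrite (@modes_widen _ _ _ (size p)) // (@modes_widen w _ _ (size p)); last first.
  by apply/leq_sizeP => j le_pj; rewrite coef_Xderiv_sub nth_default // mulr0.
apply: eq_bigr => i _; rewrite (L_deriv hV) scalerA coef_Xderiv_sub.
rewrite (_ : b - 1 - _ = b - (i : nat)%:Z - 1); last by ring.
by congr (_ *: _); rewrite mulrC rmorphN rmorphB /= opprB.
Qed.

(* For [w] of weight [N - n], [w o_n v] is [modes w (N - 2n - 2) ((X + 1)^N)]:
   the [i]-th term of the residue is the coefficient [C(N, N - i)]. *)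
Lemma in_O_modes_Xadd1_exp N w : L 0 w = (N%:Z - n%:Z)%:~R *: w ->
  O (modes w (N%:Z - 2 * n%:Z - 2) (('X + 1) ^+ N)).
Proof.
move=> w_wt; have [T wvT] := Y_trunc hV w v.
apply: (@in_O_circ_val w v); exists (N%:Z - n%:Z); split => //.
exists (N.+1 + absz (T + 2 * n%:Z + 2)%R)%N; split; first by move=> i hi; apply: wvT; lia.
rewrite subrK; under eq_bigr do rewrite binZ_nat.
rewrite -(@big_ord_widen_eq0 _ (fun i : nat => 'C(N, i)%:R *: Y (i%:Z - 2 * n%:Z - 2) w v) N.+1);
  last 2 first.
- by rewrite leq_addr.
- by move=> i /andP[lt_Ni _]; rewrite bin_small // scale0r.
rewrite (modes_widen _ _ (size_Xadd1_exp _ N)) (reindex_inj rev_ord_inj) /=.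
apply: eq_bigr => i _; have le_iN : (i <= N)%N by rewrite -ltnS.
rewrite coef_Xadd1_exp subSS bin_sub //.
by congr (_ *: Y _ w v); rewrite -subzn //; ring.
Qed.

Lemma in_O_modes_Xadd1_exp_shift (e N : nat) w : L 0 w = (N%:Z - n%:Z)%:~R *: w ->
  O (modes w (N%:Z - 2 * n%:Z - 2 - e%:Z) (('X + 1) ^+ N)).
Proof.
elim: e N w => [|e IH] N w w_wt; first by rewrite subr0; apply: in_O_modes_Xadd1_exp.
have Lw_wt : L 0 (L (-1) w) = ((N.+1)%:Z - n%:Z)%:~R *: L (-1) w.
  by rewrite (Lm1_wt w_wt) -addn1 PoszD; congr (_%:~R *: _); ring.
have O_Lw := IH N.+1 _ Lw_wt; have O_w := IH N w w_wt.
set b := (N.+1)%:Z - _ - _ - _ in O_Lw.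
rewrite modes_Lm1 Xderiv_sub_Xadd1_exp modesB !modesZ modesXM in O_Lw.
rewrite (_ : b - 1 - 1 = N%:Z - 2 * n%:Z - 2 - (e.+1)%:Z) in O_Lw; last by rewrite /b !intS; ring.
rewrite (_ : b - 1 = N%:Z - 2 * n%:Z - 2 - e%:Z) in O_Lw; last by rewrite /b intS; ring.
set P' := modes w _ _ in O_Lw *; set P := modes w _ _ in O_Lw O_w.
pose A := (2 * n + 2 + e)%N.
rewrite (_ : (N.+1)%:R - b%:~R = A%:R) in O_Lw; last first.
  by rewrite /b /A !rmorphB !rmorphM /= -!pmulrn; ring.
(* [O_Lw] says [A P' - b P \in O_n(V)], and [A != 0] as [K] has characteristic 0. *)
have A_neq0 : A%:R != 0 :> K by rewrite pnatr_eq0 /A addn2.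
have -> : P' = A%:R^-1 *: (A%:R *: P' - b%:~R *: P + b%:~R *: P).
  by rewrite subrK scalerA mulVf // scale1r.
exact/in_OZ/in_OD/in_OZ.
Qed.

Lemma in_O_modes_mul_Xadd1_exp N w q : L 0 w = (N%:Z - n%:Z)%:~R *: w ->
  O (modes w (N%:Z - 2 * n%:Z - 2) (q * ('X + 1) ^+ N)).
Proof.
move=> w_wt; suff /(_ 0%N) : forall e : nat,
    O (modes w (N%:Z - 2 * n%:Z - 2 - e%:Z) (q * ('X + 1) ^+ N)) by rewrite subr0.
elim/poly_ind: q => [|q a IH] e; first by rewrite mul0r modes0; apply: in_O0.
have -> : (q * 'X + a%:P) * ('X + 1) ^+ N = 'X * (q * ('X + 1) ^+ N) + a *: ('X + 1) ^+ N.
  by rewrite -mul_polyC; ring.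
rewrite modesD modesXM modesZ.
apply: in_OD; last by apply/in_OZ; apply: in_O_modes_Xadd1_exp_shift.
by rewrite (_ : _ - 1 = N%:Z - 2 * n%:Z - 2 - (e.+1)%:Z) //; rewrite intS; ring.
Qed.

Section FixedIndices.
Variables (u : V) (wt m : int) (M N : nat).
Hypotheses (eN : N%:Z = n%:Z + wt) (eM : M%:Z = m - n%:Z - 1).

Lemma modes_expX : modes u (N%:Z - 2 * n%:Z - 2) 'X^M = Y (wt - m - 1) u v.
Proof. by rewrite modesXn eM eN; congr (Y _ u v); ring. Qed.

Lemma modes_expX_rem :
  modes u (N%:Z - 2 * n%:Z - 2) (expX_rem K M N) =
  (-1) ^ (m + wt) *:
     \sum_(1 <= j < N.+1)
        (binZ K (m - n%:Z - 1) j.-1 * binZ K (m - n%:Z - j%:Z - 1) (N - j))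
        *: Y (wt - n%:Z - j%:Z - 1) u v.
Proof.
rewrite (modes_widen _ _ (size_expX_rem K M N)) big_add1 /= big_mkord scaler_sumr.
apply: eq_bigr => i _; rewrite scalerA coef_expX_rem //.
have -> : m + wt = (M + N + 1)%N%:Z by rewrite !PoszD eM eN; ring.
rewrite -exprnP -eM binZ_nat; congr (_ * (_ * binZ _ _ _) *: Y _ u v).
  by rewrite eM intS; ring.
by rewrite eN intS; ring.
Qed.

End FixedIndices.
End VOA.

Theorem proposition3p2 (R : realType) (V : lmodType R[i])
    (Y : int -> V -> V -> V) (vac om : V) (c : R[i])
    (hV : is_VOA Y vac om c)
    (n : nat) (u v : V) (wt : int)
    (hu : Lop Y om 0 u = wt%:~R *: u) :
  ( (- (n%:Z) < wt) ->
    (forall m : int, n%:Z + 1 <= m ->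
       in_O Y om n
         (Y (wt - m - 1) u v
          - (-1) ^ (m + wt) *:
              \sum_(1 <= j < (absz (n%:Z + wt)%R).+1)
                 (binZ R[i] (m - n%:Z - 1) (j.-1)
                  * binZ R[i] (m - n%:Z - j%:Z - 1) (subn (absz (n%:Z + wt)%R) j))
                 *: Y (wt - n%:Z - j%:Z - 1) u v))
    /\
    (forall m : int, n%:Z + 1 <= m -> m <= 2 * n%:Z + wt ->
       (-1) ^ (m + wt) *:
         \sum_(1 <= j < (absz (n%:Z + wt)%R).+1)
            (binZ R[i] (m - n%:Z - 1) (j.-1)
             * binZ R[i] (m - n%:Z - j%:Z - 1) (subn (absz (n%:Z + wt)%R) j))
            *: Y (wt - n%:Z - j%:Z - 1) u v
       = Y (wt - m - 1) u v) )
  /\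
  ( wt = - (n%:Z) ->
    forall m : int, n%:Z + 1 <= m -> in_O Y om n (Y (wt - m - 1) u v) ).
Proof.
have eM m : n%:Z + 1 <= m -> (absz (m - n%:Z - 1)%R)%:Z = m - n%:Z - 1 by lia.
split=> [wt_gt | wt_n m /eM eMm]; last first.
  have e0 : 0%N%:Z = n%:Z + wt by rewrite wt_n subrr.
  rewrite -(modes_expX _ _ _ e0 eMm) -['X^_]mulr1 -(expr0 ('X + 1)).
  by apply: (in_O_modes_mul_Xadd1_exp hV); rewrite hu wt_n sub0r.
have eN : (absz (n%:Z + wt)%R)%:Z = n%:Z + wt by lia.
split=> [m /eM eMm | m /eM eMm le_m].
  rewrite -(modes_expX _ _ _ eN eMm) -(modes_expX_rem _ _ _ eN eMm) -modesB.
  rewrite expX_sub_rem; apply: (in_O_modes_mul_Xadd1_exp hV).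
  by rewrite hu eN addrAC subrr add0r.
rewrite -(modes_expX_rem _ _ _ eN eMm) -(modes_expX _ _ _ eN eMm) expX_rem_small //; lia.
Qed.
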